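(* If $n=6$, then $\Gamma^3=\mathrm{Q}$ and $\Gamma^1\neq\Gamma^3$. For instance, $T=e+2e_{123456}$ satisfies $T\in\Gamma^3$ and $T\notin\Gamma^1$.
   Context: Let $\mathrm{C}$ be either the real Clifford algebra $C\ell_{p,q}$ with $p+q=n$, or the complex Clifford algebra $C\ell(\mathbb{C}^n)$. It has identity $e$ and generators $e_1,\dots,e_n$ satisfying $e_ae_b+e_be_a=2\eta_{ab}e$. In the real case $\eta=\mathrm{diag}(1,\dots,1,-1,\dots,-1)$ with $p$ entries $+1$ and $q$ entries $-1$. In the complex case $\eta=I_n$. For $a_1<\dots<a_k$ write $e_{a_1\dots a_k}=e_{a_1}\cdots e_{a_k}$. $\mathrm{C}^k$ is the grade-$k$ subspace, spanned by the $e_{a_1\dots a_k}$ with $k$ indices. The even subspace is $\mathrm{C}^{(0)}=\bigoplus_{k\text{ even}}\mathrm{C}^k$ and the odd subspace is $\mathrm{C}^{(1)}=\bigoplus_{k\text{ odd}}\mathrm{C}^k$. The reversion $U\mapsto\tilde U$ is the linear anti-automorphism acting on $\mathrm{C}^k$ as $(-1)^{k(k-1)/2}$. For $S\subseteq\mathrm{C}$, $S^\times$ is the set of elements of $S$ invertible in $\mathrm{C}$, and $\mathrm{C}^{\times(j)}:=(\mathrm{C}^{(j)})^\times$. $\mathrm{Z}$ is the center: $\mathrm{Z}=\mathrm{C}^0$ for $n$ even and $\mathrm{Z}=\mathrm{C}^0\oplus\mathrm{C}^n$ for $n$ odd. Define: <ul> <li>$\Gamma^k=\{T\in\mathrm{C}^\times: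 T\,\mathrm{C}^k\,T^{-1}\subseteq\mathrm{C}^k\}$;</li> <li>$\mathrm{P}:=\mathrm{Z}^\times(\mathrm{C}^{\times(0)}\cup\mathrm{C}^{\times(1)})=\{WT: W\in\mathrm{Z}^\times, T\in\mathrm{C}^{\times(0)}\cup\mathrm{C}^{\times(1)}\}$;</li> <li>$\mathrm{Q}:=\{T\in\mathrm{P}:\tilde TT\in\mathrm{Z}^\times\}$.</li> </ul> *)

(* Clifford algebras are built explicitly on the blade basis
   e_A, A a subset of {0,..,n-1}; an element is a finite function
   {set 'I_n} -> K giving its coordinates in the basis (e_A)_A. *)
From HB Require Import structures.
From mathcomp Require Import all_boot all_order all_algebra.
From mathcomp.reals Require Import reals.
From mathcomp.real_closed Require Import complex.
Set Implicit Arguments. Unset Strict Implicit. Unset Printing Implicit Defensive.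
Import Order.TTheory GRing.Theory Num.Theory.
Local Open Scope ring_scope.

Notation cl K n := {ffun {set 'I_n} -> K}.

Section Clifford.
Variables (K : fieldType) (n : nat) (eta : 'I_n -> K).

Local Notation cl := {ffun {set 'I_n} -> K}.

(* sign obtained when reordering e_A e_B: number of pairs (a,b), a in A,
   b in B with a > b *)
Definition blade_sign (A B : {set 'I_n}) : K :=
  (-1) ^+ #|[set ab : 'I_n * 'I_n | [&& ab.1 \in A, ab.2 \in B & (val ab.2 < val ab.1)%N]]|.

(* e_A e_B = blade_coef A B e_{A symdiff B} *)
Definition blade_coef (A B : {set 'I_n}) : K :=
  blade_sign A B * \prod_(i in A :&: B) eta i.

Definition symdiff (A B : {set 'I_n}) := (A :\: B) :|: (B :\: A).

(* the basis blade e_A (e_{a1...ak} = e_{a1} ... e_{ak} for a1 < ... < ak) *)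
Definition blade (A : {set 'I_n}) : cl := [ffun B => (B == A)%:R].

Definition cl_one : cl := blade set0.

Definition gen (i : 'I_n) : cl := blade [set i].

Definition cl_mul (x y : cl) : cl :=
  [ffun C => \sum_(A : {set 'I_n}) \sum_(B : {set 'I_n} | symdiff A B == C)
              x A * y B * blade_coef A B].

(* scalar multiplication c X (addition is the pointwise one on {ffun _ -> K}) *)
Definition cl_scale (c : K) (x : cl) : cl := [ffun A => c * x A].

Definition cl_inverse (T U : cl) : Prop := cl_mul T U = cl_one /\ cl_mul U T = cl_one.
Definition cl_invertible (T : cl) : Prop := exists U, cl_inverse T U.

Definition in_grade (k : nat) (X : cl) : Prop := forall A : {set 'I_n}, #|A| != k -> X A = 0.
Definition in_even (X : cl) : Prop := forall A : {set 'I_n}, odd #|A| -> X A = 0.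
Definition in_odd (X : cl) : Prop := forall A : {set 'I_n}, ~~ odd #|A| -> X A = 0.

(* center Z = C^0 (n even), C^0 + C^n (n odd) *)
Definition in_center (X : cl) : Prop :=
  forall A : {set 'I_n}, X A != 0 -> A = set0 \/ (odd n /\ A = setT).

Definition cl_rev (X : cl) : cl := [ffun A : {set 'I_n} => (-1) ^+ ('C(#|A|, 2)) * X A].

Definition Gamma (k : nat) (T : cl) : Prop :=
  exists U, cl_inverse T U /\ forall X, in_grade k X -> in_grade k (cl_mul (cl_mul T X) U).

Definition in_P (T : cl) : Prop :=
  exists W T', [/\ in_center W, cl_invertible W,
                   (in_even T' \/ in_odd T'), cl_invertible T' & T = cl_mul W T'].

Definition in_Q (T : cl) : Prop :=
  in_P T /\ in_center (cl_mul (cl_rev T) T) /\ cl_invertible (cl_mul (cl_rev T) T).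

End Clifford.

(* metric of Cl_{p,q}: first p generators square to +1, last q to -1 *)
Definition eta_pq (R : realType) (p q : nat) (i : 'I_(p + q)) : R :=
  if (i < p)%N then 1 else -1.

Definition eta_C (R : realType) (n : nat) (i : 'I_n) : R[i] := 1.

From HB Require Import structures.
From mathcomp Require Import all_boot all_order all_algebra.
From mathcomp.reals Require Import reals.
From mathcomp.real_closed Require Import complex.
From mathcomp Require Import ring.
Set Implicit Arguments. Unset Strict Implicit. Unset Printing Implicit Defensive.
Import Order.TTheory GRing.Theory Num.Theory.
Local Open Scope ring_scope.

(* The product of basis blades is e_A e_B = c(A,B) e_{A symdiff B}, and the
   structure constants c satisfy a 2-cocycle identity; this yields
   associativity.  The grade involution alpha is an automorphism and the
   reversion an anti-automorphism; for n <= 6 the grade-3 subspace is exactly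
   the common (-1)-eigenspace of alpha and of the reversion.  For n = 6 every
   generator e_i is a product of three trivectors, so whatever commutes with
   C^3 commutes with every e_i and is a scalar (n is even); likewise the
   center is C^0.
   - Q <= Gamma^3: T in P satisfies alpha T = +-T and T^-1 is a multiple of
     rev T, so T X T^-1 has the same alpha- and rev-signs as X.
   - Gamma^3 <= Q: if T C^3 T^-1 <= C^3 then T^-1 alpha(T) and rev(T) T
     commute with C^3, hence are scalars: T is even or odd and rev(T) T is a
     nonzero scalar.
   - For T = e + 2 I, I = e_{123456}: T (e - 2 I) = (1 - 4 I^2) e, and
     comparing coordinates of Y T = T e_0, with Y a vector, gives 2 = 0.
   The blade algebra is developed over an arbitrary field, dimension and
   metric; the theorem is then derived for every metric with eta_i^2 = 1 over
   a field in which 2, 3 and 5 are invertible. *)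

Section SymmetricDifference.
Variable n : nat.
Implicit Types A B C : {set 'I_n}.

Lemma in_symdiff A B x : (x \in symdiff A B) = (x \in A) (+) (x \in B).
Proof. by rewrite !inE; case: (x \in A); case: (x \in B). Qed.

Lemma symdiffC A B : symdiff A B = symdiff B A.
Proof. by apply/setP=> x; rewrite !in_symdiff addbC. Qed.
Lemma symdiffA A B C : symdiff A (symdiff B C) = symdiff (symdiff A B) C.
Proof. by apply/setP=> x; rewrite !in_symdiff addbA. Qed.
Lemma symdiffK A B : symdiff A (symdiff A B) = B.
Proof. by apply/setP=> x; rewrite !in_symdiff addKb. Qed.
Lemma symdiffKr A B : symdiff (symdiff B A) A = B.
Proof. by apply/setP=> x; rewrite !in_symdiff addbK. Qed.
Lemma symdiff0s A : symdiff set0 A = A.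
Proof. by apply/setP=> x; rewrite !in_symdiff inE. Qed.
Lemma symdiffs0 A : symdiff A set0 = A.
Proof. by apply/setP=> x; rewrite !in_symdiff inE addbF. Qed.
Lemma symdiffvv A : symdiff A A = set0.
Proof. by apply/setP=> x; rewrite !in_symdiff inE addbb. Qed.
Lemma symdiff_inj A : injective (symdiff A).
Proof. by move=> B C E; rewrite -(symdiffK A B) E symdiffK. Qed.
Lemma symdiff_injr A : injective (fun B => symdiff B A).
Proof. by move=> B C E; rewrite -(symdiffKr A B) /= E symdiffKr. Qed.

Lemma card_symdiff A B : #|symdiff A B| = (#|A :\: B| + #|B :\: A|)%N.
Proof.
rewrite -cardsUI; suff -> : (A :\: B) :&: (B :\: A) = set0 by rewrite cards0 addn0.
by apply/setP=> i; rewrite !inE; case: (i \in A); case: (i \in B); rewrite ?andbF.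
Qed.

End SymmetricDifference.

Section Signs.
Variable K : fieldType.

Lemma sign_card (T : finType) (S : {set T}) :
  (-1) ^+ #|S| = \prod_i (if i \in S then -1 else 1) :> K.
Proof. by rewrite -prodr_const big_mkcond. Qed.

Lemma sign_sqr k : (-1) ^+ k * (-1) ^+ k = 1 :> K.
Proof. by rewrite -expr2 sqrr_sign. Qed.

Lemma sign_symdiff n (A B : {set 'I_n}) :
  (-1) ^+ #|symdiff A B| = (-1) ^+ #|A| * (-1) ^+ #|B| :> K.
Proof.
rewrite !sign_card -big_split; apply: eq_bigr=> i _ /=; rewrite in_symdiff.
by case: (i \in A); case: (i \in B); rewrite /= ?mulr1 ?mul1r ?mulrNN ?mulr1.
Qed.

End Signs.

Lemma bin2D m k : 'C(m + k, 2) = ('C(m, 2) + 'C(k, 2) + m * k)%N.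
Proof.
elim: k => [|k IH]; first by rewrite addn0 muln0 bin0n !addn0.
by rewrite addnS !binS IH !bin1 mulnS; ring.
Qed.

(* With a = |A \ B|, b = |B \ A| and k = |A n B|: the reversion sign of the
   blade e_{A symdiff B} is that of e_A times that of e_B times
   (-1)^(|A| |B| + |A n B|). *)
Lemma odd_bin2_overlap a b k :
  odd 'C(a + b, 2) = odd ('C(a + k, 2) + 'C(b + k, 2) + (a + k) * (b + k) + k).
Proof.
rewrite !bin2D !oddD !oddM !oddD.
by case: (odd a); case: (odd b); case: (odd k); case: (odd 'C(a, 2));
  case: (odd 'C(b, 2)); case: (odd 'C(k, 2)).
Qed.

Section BladeAlgebra.
Variables (K : fieldType) (n : nat) (eta : 'I_n -> K).
Local Notation cl := {ffun {set 'I_n} -> K}.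
Local Notation mul := (cl_mul eta).
Local Notation sgn := (@blade_sign K n).
Local Notation coef := (blade_coef eta).
Local Notation one := (cl_one K n).
Implicit Types (A B C D : {set 'I_n}) (x y z : cl).

Definition pair_sign A B (a b : 'I_n) : K :=
  if [&& a \in A, b \in B & (val b < val a)%N] then -1 else 1.

Lemma blade_signE A B : sgn A B = \prod_a \prod_b pair_sign A B a b.
Proof.
rewrite /blade_sign -prodr_const big_mkcond pair_big /=.
by apply: eq_bigr=> -[a b] _; rewrite inE.
Qed.

Lemma blade_sign_symdiffl A B C : sgn (symdiff A B) C = sgn A C * sgn B C.
Proof.
rewrite !blade_signE -big_split; apply: eq_bigr=> a _; rewrite -big_split.
apply: eq_bigr=> b _; rewrite /pair_sign in_symdiff.
by case: (a \in A); case: (a \in B); case: (b \in C); case: (val b < val a)%N;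
  rewrite /= ?mulr1 ?mul1r ?mulrNN ?mulr1.
Qed.

Lemma blade_sign_symdiffr A B C : sgn A (symdiff B C) = sgn A B * sgn A C.
Proof.
rewrite !blade_signE -big_split; apply: eq_bigr=> a _; rewrite -big_split.
apply: eq_bigr=> b _; rewrite /pair_sign in_symdiff.
by case: (a \in A); case: (b \in B); case: (b \in C); case: (val b < val a)%N;
  rewrite /= ?mulr1 ?mul1r ?mulrNN ?mulr1.
Qed.

Lemma blade_sign0l A : sgn set0 A = 1.
Proof. by rewrite blade_signE big1 // => a _; rewrite big1 // => b _; rewrite /pair_sign inE. Qed.
Lemma blade_sign0r A : sgn A set0 = 1.
Proof.
by rewrite blade_signE big1 // => a _; rewrite big1 // => b _; rewrite /pair_sign inE andbF.
Qed.

(* Swapping: every pair (a, b) in A x B with a <> b is inverted exactly once. *)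
Lemma blade_sign_swap A B :
  sgn B A = sgn A B * ((-1) ^+ (#|A| * #|B|) * (-1) ^+ #|A :&: B|).
Proof.
have diag : \prod_a \prod_b (if [&& a \in A, b \in B & a == b] then -1 else 1)
   = (-1) ^+ #|A :&: B| :> K.
  rewrite sign_card; apply: eq_bigr=> a _.
  rewrite (bigD1 a) //= big1 ?mulr1 => [|b /negbTE nba]; last by rewrite eq_sym nba !andbF.
  by rewrite eqxx andbT inE.
have all_pairs : \prod_a \prod_b (if (a \in A) && (b \in B) then -1 else 1)
   = (-1) ^+ (#|A| * #|B|) :> K.
  transitivity (\prod_a (if a \in A then (-1) ^+ #|B| else 1) : K).
    apply: eq_bigr => a _; case: (a \in A) => /=; last by rewrite big1.
    by rewrite sign_card.
  by rewrite -big_mkcond prodr_const -exprM mulnC.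
have key : (sgn A B * sgn B A) * (-1) ^+ #|A :&: B| = (-1) ^+ (#|A| * #|B|).
  rewrite -diag -all_pairs blade_signE [sgn B A]blade_signE.
  rewrite [X in _ * X * _]exchange_big /= -!big_split; apply: eq_bigr=> a _.
  rewrite -!big_split; apply: eq_bigr=> b _; rewrite /pair_sign /=.
  case: (a \in A); case: (b \in B); rewrite /= ?mulr1 ?mul1r //.
  have [lt|gt|eq] := ltngtP (val b) (val a).
  - by rewrite (_ : a == b = false) ?mulr1 //; apply/negbTE; rewrite -val_eqE /= neq_ltn lt orbT.
  - by rewrite (_ : a == b = false) ?mul1r ?mulr1 //; apply/negbTE; rewrite -val_eqE /= neq_ltn gt.
  - by rewrite (_ : a == b) ?mul1r // -val_eqE /= eq.
rewrite -key; transitivity ((sgn A B * sgn A B) * sgn B A *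
  ((-1) ^+ #|A :&: B| * (-1) ^+ #|A :&: B|)); last by ring.
by rewrite !sign_sqr mul1r mulr1.
Qed.

Lemma blade_coef0l A : coef set0 A = 1.
Proof. by rewrite /blade_coef blade_sign0l set0I big_set0 mulr1. Qed.
Lemma blade_coef0r A : coef A set0 = 1.
Proof. by rewrite /blade_coef blade_sign0r setI0 big_set0 mulr1. Qed.

(* The 2-cocycle identity behind associativity. *)
Lemma blade_coef_cocycle A B C :
  coef A B * coef (symdiff A B) C = coef B C * coef A (symdiff B C).
Proof.
rewrite /blade_coef blade_sign_symdiffl blade_sign_symdiffr.
have metric : (\prod_(i in A :&: B) eta i) * (\prod_(i in symdiff A B :&: C) eta i) =
              (\prod_(i in B :&: C) eta i) * (\prod_(i in A :&: symdiff B C) eta i).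
  have mkcond S : \prod_(i in S) eta i = \prod_i (if i \in S then eta i else 1).
    by rewrite big_mkcond.
  rewrite !mkcond -!big_split; apply: eq_bigr=> i _ /=.
  rewrite !in_setI !in_symdiff.
  by case: (i \in A); case: (i \in B); case: (i \in C); rewrite /= ?mulr1 ?mul1r.
transitivity (sgn A B * sgn A C * sgn B C *
  ((\prod_(i in A :&: B) eta i) * (\prod_(i in symdiff A B :&: C) eta i))); first by ring.
by rewrite metric; ring.
Qed.

Lemma blade_coef_anti A B :
  odd (#|A| * #|B| + #|A :&: B|) -> coef B A = - coef A B.
Proof.
move=> H; rewrite /blade_coef blade_sign_swap -exprD -signr_odd H expr1 setIC.
by rewrite mulrN1 mulNr.
Qed.

Lemma blade_coef_neq0 A B : (forall i, eta i != 0) -> coef A B != 0.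
Proof.
move=> eta_neq0; rewrite /blade_coef mulf_neq0 ?signr_eq0 //.
by apply/prodf_neq0=> i _.
Qed.

(* Reversion of a product of two blades. *)
Lemma blade_coef_rev A B :
  (-1) ^+ 'C(#|symdiff A B|, 2) * coef A B =
  (-1) ^+ 'C(#|A|, 2) * (-1) ^+ 'C(#|B|, 2) * coef B A :> K.
Proof.
have cA : #|A| = (#|A :\: B| + #|A :&: B|)%N by rewrite addnC cardsID.
have cB : #|B| = (#|B :\: A| + #|A :&: B|)%N by rewrite addnC setIC cardsID.
have sign_rev : (-1) ^+ 'C(#|symdiff A B|, 2) =
   (-1) ^+ 'C(#|A|, 2) * (-1) ^+ 'C(#|B|, 2) *
   ((-1) ^+ (#|A| * #|B|) * (-1) ^+ #|A :&: B|) :> K.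
  rewrite -[LHS]signr_odd card_symdiff (odd_bin2_overlap _ _ #|A :&: B|).
  by rewrite -cA -cB -addnA signr_odd !exprD mulrA.
rewrite sign_rev /blade_coef [sgn B A]blade_sign_swap [B :&: A]setIC.
set u := (-1) ^+ 'C(#|A|, 2); set v := (-1) ^+ 'C(#|B|, 2).
set w := (-1) ^+ (#|A| * #|B|) * (-1) ^+ #|A :&: B|.
by ring.
Qed.

Lemma cl_mulE x y C :
  mul x y C = \sum_A x A * y (symdiff A C) * coef A (symdiff A C).
Proof.
rewrite ffunE; apply: eq_bigr=> A _.
rewrite (big_pred1 (symdiff A C)) // => B /=.
by apply/eqP/eqP=> [<-|->]; rewrite symdiffK.
Qed.

Lemma cl_mulA x y z : mul x (mul y z) = mul (mul x y) z.
Proof.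
apply/ffunP=> D; rewrite !cl_mulE.
under [RHS]eq_bigr => E _ do rewrite cl_mulE !mulr_suml.
rewrite exchange_big /=; apply: eq_bigr=> A _.
rewrite cl_mulE mulr_sumr mulr_suml [RHS](reindex_inj (@symdiff_inj n A)) /=.
apply: eq_bigr=> B _; rewrite symdiffK.
have E : symdiff (symdiff A B) D = symdiff B (symdiff A D).
  by rewrite -symdiffA [symdiff A _]symdiffA [symdiff A B]symdiffC -symdiffA.
have := blade_coef_cocycle A B (symdiff B (symdiff A D)); rewrite symdiffK E => H.
transitivity (x A * y B * z (symdiff B (symdiff A D)) *
  (coef B (symdiff B (symdiff A D)) * coef A (symdiff A D))); first by ring.
by rewrite -H; ring.
Qed.

Lemma cl_mul_bladel B x C : mul (blade K B) x C = coef B (symdiff B C) * x (symdiff B C).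
Proof.
rewrite cl_mulE (bigD1 B) //= big1 => [|A nAB]; last by rewrite ffunE (negbTE nAB) !mul0r.
by rewrite ffunE eqxx mul1r addr0 mulrC.
Qed.

Lemma cl_mul_blader x B C : mul x (blade K B) C = x (symdiff C B) * coef (symdiff C B) B.
Proof.
rewrite cl_mulE (bigD1 (symdiff C B)) //= big1 => [|A nAB].
  have -> : symdiff (symdiff C B) C = B by rewrite symdiffC symdiffK.
  by rewrite ffunE eqxx mulr1 addr0.
rewrite ffunE; case: eqP => [E|]; last by rewrite mulr0 mul0r.
by move: nAB; rewrite -E [symdiff C _]symdiffC symdiffKr eqxx.
Qed.

Lemma blade_mul A B : mul (blade K A) (blade K B) = cl_scale (coef A B) (blade K (symdiff A B)).
Proof.
apply/ffunP=> C; rewrite cl_mul_bladel !ffunE.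
have -> : (symdiff A C == B) = (C == symdiff A B).
  by apply/eqP/eqP=> [<-|->]; rewrite symdiffK.
by case: eqP=> [->|]; rewrite ?symdiffK ?mulr1 ?mulr0.
Qed.

Lemma cl_mul1x x : mul one x = x.
Proof. by apply/ffunP=> C; rewrite cl_mul_bladel symdiff0s blade_coef0l mul1r. Qed.
Lemma cl_mulx1 x : mul x one = x.
Proof. by apply/ffunP=> C; rewrite cl_mul_blader symdiffs0 blade_coef0r mulr1. Qed.

Lemma cl_mul0x x : mul 0 x = 0.
Proof. by apply/ffunP=> C; rewrite cl_mulE ffunE big1 // => A _; rewrite ffunE !mul0r. Qed.

Lemma cl_mulZl c x y : mul (cl_scale c x) y = cl_scale c (mul x y).
Proof.
apply/ffunP=> C; rewrite cl_mulE [RHS]ffunE cl_mulE mulr_sumr.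
by apply: eq_bigr=> A _; rewrite ffunE !mulrA.
Qed.
Lemma cl_mulZr c x y : mul x (cl_scale c y) = cl_scale c (mul x y).
Proof.
apply/ffunP=> C; rewrite cl_mulE [RHS]ffunE cl_mulE mulr_sumr.
by apply: eq_bigr=> A _; rewrite ffunE; ring.
Qed.
Lemma cl_mulDl x y z : mul (x + y) z = mul x z + mul y z.
Proof.
apply/ffunP=> C; rewrite cl_mulE [RHS]ffunE !cl_mulE -big_split.
by apply: eq_bigr=> A _; rewrite ffunE !mulrDl.
Qed.
Lemma cl_mulDr x y z : mul x (y + z) = mul x y + mul x z.
Proof.
apply/ffunP=> C; rewrite cl_mulE [RHS]ffunE !cl_mulE -big_split.
by apply: eq_bigr=> A _; rewrite ffunE mulrDr mulrDl.
Qed.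

Lemma cl_addE x y A : (x + y) A = x A + y A.
Proof. by rewrite ffunE. Qed.
Lemma cl_scaleE c x A : cl_scale c x A = c * x A.
Proof. by rewrite ffunE. Qed.
Lemma cl_scaleA c d x : cl_scale c (cl_scale d x) = cl_scale (c * d) x.
Proof. by apply/ffunP=> A; rewrite !ffunE mulrA. Qed.
Lemma cl_scale1 x : cl_scale 1 x = x.
Proof. by apply/ffunP=> A; rewrite !ffunE mul1r. Qed.
Lemma cl_scale_inj c x y : c != 0 -> cl_scale c x = cl_scale c y -> x = y.
Proof. by move=> c0 E; rewrite -[x]cl_scale1 -[y]cl_scale1 -(mulVf c0) -!cl_scaleA E. Qed.

Lemma cl_one_neq0 : one != 0.
Proof.
apply/eqP=> /(congr1 (fun f : cl => f set0)); rewrite !ffunE eqxx.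
by move/eqP; rewrite oner_eq0.
Qed.

Lemma cl_inv_unique T U V : mul U T = one -> mul T V = one -> U = V.
Proof. by move=> UT TV; rewrite -[U]cl_mulx1 -TV cl_mulA UT cl_mul1x. Qed.

Definition cl_alpha x : cl := [ffun A : {set 'I_n} => (-1) ^+ #|A| * x A].

Lemma cl_alphaM x y : cl_alpha (mul x y) = mul (cl_alpha x) (cl_alpha y).
Proof.
apply/ffunP=> C; rewrite ffunE !cl_mulE mulr_sumr; apply: eq_bigr=> A _.
rewrite !ffunE sign_symdiff.
transitivity (((-1) ^+ #|A| * (-1) ^+ #|A|) *
  ((-1) ^+ #|C| * (x A * y (symdiff A C) * coef A (symdiff A C)))).
  by rewrite sign_sqr mul1r.
by ring.
Qed.

Lemma cl_alphaK x : cl_alpha (cl_alpha x) = x.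
Proof. by apply/ffunP=> A; rewrite !ffunE mulrA sign_sqr mul1r. Qed.
Lemma cl_alphaZ c x : cl_alpha (cl_scale c x) = cl_scale c (cl_alpha x).
Proof. by apply/ffunP=> A; rewrite !ffunE; ring. Qed.
Lemma cl_alpha1 : cl_alpha one = one.
Proof.
apply/ffunP=> A; rewrite !ffunE; case: eqP=> [->|]; last by rewrite mulr0.
by rewrite cards0 expr0 mul1r.
Qed.

Lemma cl_revM x y : cl_rev (mul x y) = mul (cl_rev y) (cl_rev x).
Proof.
apply/ffunP=> C; rewrite ffunE !cl_mulE mulr_sumr.
rewrite [RHS](reindex_inj (@symdiff_injr n C)) /=.
apply: eq_bigr=> A _; rewrite !ffunE symdiffKr.
have := blade_coef_rev A (symdiff A C); rewrite symdiffK => H.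
transitivity (x A * y (symdiff A C) * ((-1) ^+ 'C(#|C|, 2) * coef A (symdiff A C)));
  first by ring.
by rewrite H; ring.
Qed.

Lemma cl_revK x : cl_rev (cl_rev x) = x.
Proof. by apply/ffunP=> A; rewrite !ffunE mulrA sign_sqr mul1r. Qed.
Lemma cl_revZ c x : cl_rev (cl_scale c x) = cl_scale c (cl_rev x).
Proof. by apply/ffunP=> A; rewrite !ffunE; ring. Qed.
Lemma cl_revD x y : cl_rev (x + y) = cl_rev x + cl_rev y.
Proof. by apply/ffunP=> A; rewrite !ffunE mulrDr. Qed.
Lemma cl_rev1 : cl_rev one = one.
Proof.
apply/ffunP=> A; rewrite !ffunE; case: eqP=> [->|]; last by rewrite mulr0.
by rewrite cards0 bin0n expr0 mul1r.
Qed.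
Lemma cl_alpha_rev x : cl_alpha (cl_rev x) = cl_rev (cl_alpha x).
Proof. by apply/ffunP=> A; rewrite !ffunE; ring. Qed.

End BladeAlgebra.

Lemma eq_opp_0 (K : fieldType) (a : K) : 2%:R != 0 :> K -> a = - a -> a = 0.
Proof.
move=> two_neq0 E; have : a *+ 2 = 0 by rewrite mulr2n {1}E addNr.
by rewrite -mulr_natl => /eqP; rewrite mulf_eq0 (negbTE two_neq0) => /eqP.
Qed.

Section Scalars.
Variables (K : fieldType) (n : nat) (eta : 'I_n -> K).
Local Notation cl := {ffun {set 'I_n} -> K}.
Local Notation mul := (cl_mul eta).
Local Notation one := (cl_one K n).
Implicit Types (A : {set 'I_n}) (x y Z : cl).

Definition cl_scalar (c : K) : cl := cl_scale c one.
Definition cl_commute x y := mul x y = mul y x.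

Lemma cl_scalarE c A : cl_scalar c A = c * (A == set0)%:R.
Proof. by rewrite !ffunE. Qed.

Lemma cl_mul_scalarl c x : mul (cl_scalar c) x = cl_scale c x.
Proof. by rewrite cl_mulZl cl_mul1x. Qed.
Lemma cl_mul_scalarr c x : mul x (cl_scalar c) = cl_scale c x.
Proof. by rewrite cl_mulZr cl_mulx1. Qed.

Lemma cl_commuteM Z x y : cl_commute Z x -> cl_commute Z y -> cl_commute Z (mul x y).
Proof. by move=> hx hy; rewrite /cl_commute cl_mulA hx -cl_mulA hy cl_mulA. Qed.

Lemma scalar_center c : in_center (cl_scalar c).
Proof.
move=> A; rewrite cl_scalarE; case: (A =P set0) => [->|_]; first by left.
by rewrite mulr0 eqxx.
Qed.

Lemma scalar_inverse c : c != 0 -> cl_inverse eta (cl_scalar c) (cl_scalar c^-1).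
Proof.
move=> c0; rewrite /cl_inverse !cl_mul_scalarl /cl_scalar !cl_scaleA.
by rewrite mulVf ?mulfV ?cl_scale1.
Qed.

Lemma invertible_scalar_neq0 c : cl_invertible eta (cl_scalar c) -> c != 0.
Proof.
case=> V [H _]; apply/eqP=> c0; move: H; rewrite cl_mul_scalarl c0.
have -> : cl_scale 0 V = 0 by apply/ffunP=> A; rewrite !ffunE mul0r.
by move=> E; move: (cl_one_neq0 K n); rewrite -E eqxx.
Qed.

Lemma center_scalar x : ~~ odd n -> in_center x -> x = cl_scalar (x set0).
Proof.
move=> n_even x_center; apply/ffunP=> A; rewrite cl_scalarE.
have [->|nA] := eqP; first by rewrite mulr1.
rewrite mulr0; apply/eqP; apply: contraT => xA.
by case: (x_center A xA) => // -[n_odd _]; rewrite n_odd in n_even.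
Qed.

(* In even dimension (and characteristic <> 2, non-degenerate metric), an
   element commuting with every generator e_i is a scalar: a blade e_A with
   A <> 0 anticommutes with e_i for i in A (|A| even) or i notin A (|A| odd). *)
Lemma commute_gens_scalar Z :
  (forall i, eta i != 0) -> 2%:R != 0 :> K -> ~~ odd n ->
  (forall i, cl_commute Z (gen K i)) -> Z = cl_scalar (Z set0).
Proof.
move=> eta_neq0 two_neq0 n_even ZE; apply/ffunP=> A; rewrite cl_scalarE.
have [->|nA] := eqP; first by rewrite mulr1.
rewrite mulr0.
have anti i : odd (#|A| * #|[set i]| + #|A :&: [set i]|) -> Z A = 0.
  move=> odd_swap; have := congr1 (fun f : cl => f (symdiff [set i] A)) (ZE i).
  rewrite /gen cl_mul_blader cl_mul_bladel symdiffK.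
  have -> : symdiff (symdiff [set i] A) [set i] = A by rewrite symdiffC symdiffK.
  rewrite (blade_coef_anti eta odd_swap) => E.
  have : Z A * blade_coef eta A [set i] = 0.
    by apply: eq_opp_0 => //; rewrite {1}E mulNr mulrC.
  by move/eqP; rewrite mulf_eq0 (negbTE (blade_coef_neq0 _ _ eta_neq0)) orbF => /eqP.
have [A_odd|A_even] := boolP (odd #|A|).
  have [i iA] : exists i, i \notin A.
    apply/existsP; apply: contraTT A_odd => /existsPn allA.
    have -> : A = setT by apply/setP=> j; rewrite inE; move: (allA j) => /negbNE.
    by rewrite cardsT card_ord.
  apply: (anti i); rewrite cards1 muln1 (_ : A :&: [set i] = set0) ?cards0 ?addn0 //.
  by apply/setP=> j; rewrite !inE; case: eqP => [->|]; rewrite ?(negbTE iA) ?andbF.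
have [i iA] : exists i, i \in A by apply/set0Pn; apply/eqP.
apply: (anti i); rewrite cards1 muln1 (_ : A :&: [set i] = [set i]) ?cards1 ?addn1 //=.
by apply/setP=> j; rewrite !inE; case: eqP => [->|]; rewrite ?iA ?andbF.
Qed.

End Scalars.

Section GradeInvolution.
Variables (K : fieldType) (n : nat).
Local Notation cl := {ffun {set 'I_n} -> K}.
Implicit Types (A B : {set 'I_n}) (T X : cl).

Lemma alpha_eigen_parity T z :
  2%:R != 0 :> K -> T != 0 -> cl_alpha T = cl_scale z T -> in_even T \/ in_odd T.
Proof.
move=> two_neq0 T_neq0 aT.
have [A TA] : exists A, T A != 0.
  apply/existsP; apply: contraNT T_neq0 => /existsPn TA.
  by apply/eqP/ffunP=> A; rewrite ffunE; move: (TA A); rewrite negbK => /eqP.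
have zz : z ^+ 2 = 1.
  have := congr1 (fun f : cl => f A) (cl_alphaK T); rewrite aT cl_alphaZ aT cl_scaleA.
  rewrite ffunE => E; apply/eqP; rewrite -subr_eq0; apply/eqP; apply: (mulIf TA).
  by rewrite mulrBl expr2 E mul1r subrr mul0r.
move/eqP: zz; rewrite sqrf_eq1 => /orP[]/eqP zv; [left|right] => B pB;
  have := congr1 (fun f : cl => f B) aT; rewrite !ffunE zv -signr_odd.
- by rewrite pB expr1 mul1r => E; apply: eq_opp_0 => //; rewrite -{1}E mulN1r.
- by rewrite (negbTE pB) expr0 mul1r => E; apply: eq_opp_0 => //; rewrite {1}E mulN1r.
Qed.

Lemma parity_alpha_eigen T :
  in_even T \/ in_odd T -> exists2 z, z * z = 1 & cl_alpha T = cl_scale z T.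
Proof.
case=> pT; [exists 1|exists (-1)]; rewrite ?mulr1 ?mulrNN ?mulr1 //;
  apply/ffunP=> A; rewrite !ffunE -signr_odd; have [oA|eA] := boolP (odd #|A|).
- by rewrite pT // !mulr0.
- by rewrite expr0.
- by rewrite expr1.
- by rewrite pT // !mulr0.
Qed.

Lemma blade_grade k B : #|B| = k -> in_grade k (blade K B).
Proof. by move=> cB A nA; rewrite ffunE; case: eqP => // EA; rewrite EA cB eqxx in nA. Qed.

(* Elements of C^3 are (-1)-eigenvectors of alpha and of the reversion;
   for n <= 6 this characterizes C^3, since 3 is the only k <= 6 with k and
   k(k-1)/2 both odd. *)
Lemma grade3_signs X : in_grade 3 X ->
  cl_alpha X = cl_scale (-1) X /\ cl_rev X = cl_scale (-1) X.
Proof.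
move=> X3; split; apply/ffunP=> A; rewrite !ffunE; have [->|nA] := eqVneq #|A| 3%N;
  by rewrite ?(X3 A nA) ?mulr0 // -signr_odd /= expr1.
Qed.

Lemma signs_grade3 X : (n <= 6)%N -> 2%:R != 0 :> K ->
  cl_alpha X = cl_scale (-1) X -> cl_rev X = cl_scale (-1) X -> in_grade 3 X.
Proof.
move=> n_le6 two_neq0 aX rX A nA.
have := congr1 (fun f : cl => f A) aX; have := congr1 (fun f : cl => f A) rX.
rewrite !ffunE -signr_odd -[(-1) ^+ #|A|]signr_odd => r a.
have A_le6 : (#|A| <= 6)%N.
  by apply: leq_trans n_le6; have := max_card (mem A); rewrite card_ord.
have : odd #|A| = false \/ odd 'C(#|A|, 2) = false.
  by move: nA A_le6; case: #|A| => [|[|[|[|[|[|[|k]]]]]]] //= _ _; by [left|right].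
case=> E; [move: a|move: r]; rewrite E expr0 mul1r mulN1r; exact: eq_opp_0.
Qed.

End GradeInvolution.

Local Notation o k := (@Ordinal 6 k isT).

(* Every generator of Cl_6 is a product of three trivector blades, e.g.
   e_{012} e_{234} e_{134} = +- e_0; the other cases are its rotations. *)
Lemma gen_three_trivectors (i : 'I_6) : exists B1 B2 B3 : {set 'I_6},
  [/\ #|B1| = 3%N, #|B2| = 3%N, #|B3| = 3%N & symdiff (symdiff B1 B2) B3 = [set i]].
Proof.
have card3 (a b c : 'I_6) : a != b -> a != c -> b != c -> #|[set a; b; c]| = 3%N.
  by move=> ab ac bc; rewrite -setUA cardsU1 cards2 !inE negb_or ab ac bc.
case: i => -[|[|[|[|[|[|//]]]]]] lt_i6;
  [ exists [set o 0; o 1; o 2], [set o 2; o 3; o 4], [set o 1; o 3; o 4]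
  | exists [set o 1; o 2; o 3], [set o 3; o 4; o 5], [set o 2; o 4; o 5]
  | exists [set o 2; o 3; o 4], [set o 4; o 5; o 0], [set o 3; o 5; o 0]
  | exists [set o 3; o 4; o 5], [set o 5; o 0; o 1], [set o 4; o 0; o 1]
  | exists [set o 4; o 5; o 0], [set o 0; o 1; o 2], [set o 5; o 1; o 2]
  | exists [set o 5; o 0; o 1], [set o 1; o 2; o 3], [set o 0; o 2; o 3] ];
  split; try by apply: card3.
all: by apply/setP=> x; rewrite !in_symdiff !inE; case: x; do 6?case=> //.
Qed.

Section DimensionSix.
Variables (K : fieldType) (eta : 'I_6 -> K).
Hypothesis eta_neq0 : forall i, eta i != 0.
Hypothesis two_neq0 : 2%:R != 0 :> K.
Local Notation cl := {ffun {set 'I_6} -> K}.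
Local Notation mul := (cl_mul eta).
Local Notation one := (cl_one K 6).
Local Notation scalar := (@cl_scalar K 6).
Implicit Types (T U X Z : cl).

Lemma trivector_commutant_scalar Z :
  (forall X, in_grade 3 X -> cl_commute eta Z X) -> Z = scalar (Z set0).
Proof.
move=> Z3; apply: commute_gens_scalar => // i.
have [B1 [B2 [B3 [c1 c2 c3 E]]]] := gen_three_trivectors i.
have : cl_commute eta Z (mul (mul (blade K B1) (blade K B2)) (blade K B3)).
  by do 2?apply: cl_commuteM; apply: Z3; apply: blade_grade.
rewrite blade_mul cl_mulZl blade_mul E /cl_commute !cl_mulZr !cl_mulZl !cl_scaleA.
by apply: cl_scale_inj; rewrite mulf_neq0 ?blade_coef_neq0.
Qed.

Lemma Q_sub_Gamma3 T : in_Q eta T -> Gamma eta 3 T.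
Proof.
case=> -[W [T' [W_center [W' [WW' _]] T'_parity [V' [T'V' _]] ET]]] [M_center M_inv].
have EM := @center_scalar _ 6 _ isT M_center; set m := _ set0 in EM.
have m_neq0 : m != 0 by apply: (@invertible_scalar_neq0 _ 6 eta); rewrite -EM.
have EW := @center_scalar _ 6 _ isT W_center.
pose U := cl_scale m^-1 (cl_rev T).
have UT : mul U T = one by rewrite cl_mulZl EM /cl_scalar cl_scaleA mulVf ?cl_scale1.
have TU : mul T U = one.
  have TV : mul T (mul V' W') = one.
    by rewrite ET -cl_mulA [mul T' _]cl_mulA T'V' cl_mul1x WW'.
  by rewrite (cl_inv_unique UT TV).
exists U; split => // X X3.
have [z zz aT] : exists2 z, z * z = 1 & cl_alpha T = cl_scale z T.
  have [z zz aT'] := parity_alpha_eigen T'_parity; exists z => //.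
  have aW : cl_alpha W = W by rewrite EW /cl_scalar cl_alphaZ cl_alpha1.
  by rewrite ET cl_alphaM aW aT' cl_mulZr.
have aU : cl_alpha U = cl_scale z U.
  by rewrite cl_alphaZ cl_alpha_rev aT cl_revZ !cl_scaleA mulrC.
have [aX rX] := grade3_signs X3.
apply: signs_grade3 => //.
  rewrite !cl_alphaM aT aU aX !(cl_mulZl, cl_mulZr) !cl_scaleA.
  by congr (cl_scale _ _); rewrite zz mul1r.
rewrite !cl_revM rX cl_revZ cl_revK !(cl_mulZl, cl_mulZr) !cl_scaleA -!cl_mulA.
by rewrite [_ * -1]mulrC.
Qed.

(* If T C^3 T^-1 <= C^3 then T^-1 alpha(T) commutes with C^3, so alpha T is a
   multiple of T and T is even or odd. *)
Lemma Gamma3_parity T : Gamma eta 3 T -> in_even T \/ in_odd T.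
Proof.
case=> U [[TU UT] conj3].
have aUT : mul (cl_alpha U) (cl_alpha T) = one by rewrite -cl_alphaM UT cl_alpha1.
have Z3 X : in_grade 3 X -> cl_commute eta (mul U (cl_alpha T)) X.
  move=> X3; have [aX _] := grade3_signs X3; have [aY _] := grade3_signs (conj3 X X3).
  have conj_alpha : mul (cl_alpha T) (mul X (cl_alpha U)) = mul T (mul X U).
    rewrite !cl_mulA; apply: (@cl_scale_inj _ _ (-1)); rewrite ?oppr_eq0 ?oner_eq0 //.
    by rewrite -aY !cl_alphaM aX !(cl_mulZl, cl_mulZr).
  rewrite /cl_commute -[LHS](cl_mulx1 eta) -aUT -!cl_mulA [mul X (mul (cl_alpha U) _)]cl_mulA.
  by rewrite [mul (cl_alpha T) (mul (mul X _) _)]cl_mulA conj_alpha !cl_mulA UT cl_mul1x.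
have EZ := trivector_commutant_scalar Z3; set z := _ set0 in EZ.
apply: (alpha_eigen_parity (z := z)) => //.
  by apply: contra_neq (cl_one_neq0 K 6) => T0; rewrite -TU T0 cl_mul0x.
by rewrite -[cl_alpha T](cl_mul1x eta) -TU -cl_mulA EZ cl_mul_scalarr.
Qed.

(* Likewise rev(T) T commutes with C^3, hence is a scalar. *)
Lemma Gamma3_rev_scalar T :
  Gamma eta 3 T -> mul (cl_rev T) T = scalar (mul (cl_rev T) T set0).
Proof.
case=> U [[TU UT] conj3]; apply: trivector_commutant_scalar => X X3.
have [_ rX] := grade3_signs X3; have [_ rY] := grade3_signs (conj3 X X3).
have conj_rev : mul (cl_rev U) (mul X (cl_rev T)) = mul (mul T X) U.
  apply: (@cl_scale_inj _ _ (-1)); rewrite ?oppr_eq0 ?oner_eq0 //.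
  by rewrite -rY !cl_revM rX !(cl_mulZl, cl_mulZr).
rewrite /cl_commute -[LHS](cl_mulx1 eta) -UT.
transitivity (mul (cl_rev T) (mul (mul (mul T X) U) T)); first by rewrite -!cl_mulA.
by rewrite -conj_rev -!cl_mulA cl_mulA -cl_revM UT cl_rev1 cl_mul1x.
Qed.

(* Gamma^3 <= Q: T itself is an even or odd unit, and rev(T) T is a unit
   scalar with inverse T^-1 rev(T^-1). *)
Lemma Gamma3_sub_Q T : Gamma eta 3 T -> in_Q eta T.
Proof.
move=> T3; have [U [[TU UT] _]] := T3.
have one_center : in_center one by rewrite -[one]cl_scale1; apply: scalar_center.
split; last split.
- exists one, T; split => //; first by exists one; split; apply: cl_mul1x.
  + exact: Gamma3_parity.
  + by exists U.
  + by rewrite cl_mul1x.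
- by rewrite (Gamma3_rev_scalar T3); apply: scalar_center.
exists (mul U (cl_rev U)); split.
  by rewrite -!cl_mulA [mul T (mul U _)]cl_mulA TU cl_mul1x -cl_revM UT cl_rev1.
by rewrite -!cl_mulA [mul (cl_rev U) (mul (cl_rev T) T)]cl_mulA -cl_revM TU cl_rev1 cl_mul1x.
Qed.

End DimensionSix.

Section Example.
Variables (K : fieldType) (eta : 'I_6 -> K).
Local Notation cl := {ffun {set 'I_6} -> K}.
Local Notation mul := (cl_mul eta).
Local Notation one := (cl_one K 6).
Local Notation scalar := (@cl_scalar K 6).

Definition pseudoscalar : cl := blade K setT.
Definition example_elt : cl := one + cl_scale 2 pseudoscalar.
Definition kappa : K := blade_coef eta setT setT.

Lemma pseudoscalar_sqr : mul pseudoscalar pseudoscalar = scalar kappa.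
Proof. by rewrite blade_mul symdiffvv. Qed.

(* rev I = -I in dimension 6, since 6 * 5 / 2 is odd. *)
Lemma rev_example_elt : cl_rev example_elt = one + cl_scale (-2) pseudoscalar.
Proof.
rewrite cl_revD cl_rev1 cl_revZ; congr (_ + _); apply/ffunP=> A; rewrite !ffunE.
case: (A =P setT) => [->|]; last by rewrite !mulr0.
by rewrite cardsT card_ord -signr_odd /= expr1; ring.
Qed.

Lemma example_norm :
  mul example_elt (cl_rev example_elt) = scalar (1 - 4%:R * kappa) /\
  mul (cl_rev example_elt) example_elt = scalar (1 - 4%:R * kappa).
Proof.
rewrite rev_example_elt /example_elt.
by split; rewrite !(cl_mulDl, cl_mulDr, cl_mulZl, cl_mulZr, cl_mul1x, cl_mulx1) pseudoscalar_sqr;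
  apply/ffunP=> A; rewrite !ffunE; ring.
Qed.

Lemma example_even : in_even example_elt.
Proof.
move=> A oA; rewrite !ffunE.
case: (A =P set0) => [E|_]; first by rewrite E cards0 in oA.
case: (A =P setT) => [E|_]; first by rewrite E cardsT card_ord in oA.
by rewrite mulr0 addr0.
Qed.

Lemma example_in_Q : 1 - 4%:R * kappa != 0 -> in_Q eta example_elt.
Proof.
move=> d_neq0; have [T_revT revT_T] := example_norm.
have one_center : in_center one by rewrite -[one]cl_scale1; apply: scalar_center.
split; last split.
- exists one, example_elt; split => //; first by exists one; split; apply: cl_mul1x.
  + by left; apply: example_even.
  + exists (cl_scale (1 - 4%:R * kappa)^-1 (cl_rev example_elt)).
    by split; rewrite ?cl_mulZr ?cl_mulZl ?T_revT ?revT_T /cl_scalar cl_scaleA mulVf ?cl_scale1.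
  + by rewrite cl_mul1x.
- by rewrite revT_T; apply: scalar_center.
- by rewrite revT_T; exists (scalar (1 - 4%:R * kappa)^-1); apply: scalar_inverse.
Qed.

(* T e_0 T^-1 is not a vector: writing Y = T e_0 T^-1, the relation
   Y T = T e_0 at the coordinates {0} and {1,...,5} forces Y_{0} = 1 and
   Y_{0} = -1. *)
Lemma example_not_Gamma1 :
  (forall i, eta i != 0) -> 2%:R != 0 :> K -> ~ Gamma eta 1 example_elt.
Proof.
move=> eta_neq0 two_neq0 [U [[_ UT] conj1]].
pose i0 : 'I_6 := ord0; pose A5 := symdiff [set i0] setT.
have A5_card : #|A5| = 5%N.
  rewrite (_ : A5 = [set~ i0]) ?cardsC1 ?card_ord //.
  by apply/setP=> j; rewrite in_symdiff !inE addbT.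
have X1 : in_grade 1 (gen K i0) by apply: blade_grade; rewrite cards1.
have Y1 := conj1 _ X1; set Y := mul (mul example_elt _) U in Y1.
have YT : mul Y example_elt = mul example_elt (gen K i0).
  by rewrite /Y -cl_mulA UT cl_mulx1.
clearbody Y.
have YA5 : Y A5 = 0 by apply: Y1; rewrite A5_card.
have XA5 : gen K i0 A5 = 0 by rewrite ffunE; case: eqP => // E; rewrite E cards1 in A5_card.
have anti : blade_coef eta [set i0] setT = - blade_coef eta setT [set i0].
  by apply: blade_coef_anti; rewrite cardsT card_ord cards1 setTI cards1.
set c := blade_coef eta setT [set i0] in anti.
have c_neq0 : 2%:R * c != 0 by rewrite mulf_neq0 ?blade_coef_neq0.
have S1 : symdiff A5 setT = [set i0] by apply: symdiffKr.
have S2 : symdiff setT A5 = [set i0] by rewrite symdiffC S1.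
have S3 : symdiff setT [set i0] = A5 by apply: symdiffC.
have X0 : gen K i0 [set i0] = 1 by rewrite ffunE eqxx.
move: (congr1 (fun f : cl => f A5) YT) (congr1 (fun f : cl => f [set i0]) YT).
rewrite /example_elt !(cl_mulDl, cl_mulDr, cl_mulx1, cl_mul1x, cl_mulZl, cl_mulZr).
rewrite !cl_addE !cl_scaleE /pseudoscalar !(cl_mul_blader, cl_mul_bladel).
rewrite S1 S2 S3 -/A5 YA5 XA5 X0 anti !(mul0r, mulr0, add0r, addr0) mulr1 => E5 E1.
have : 2%:R * c * 2%:R = 0.
  transitivity (2%:R * c - 2%:R * (Y [set i0] * - c)); first by rewrite E1; ring.
  by rewrite E5 subrr.
by move/eqP; rewrite mulf_eq0 (negbTE c_neq0) (negbTE two_neq0).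
Qed.

End Example.

(* The theorem for any metric with eta_i^2 = 1 over a field in which 2, 3
   and 5 are nonzero; then kappa = +-1, so 1 - 4 kappa is -3 or 5. *)
Lemma unit_metric_Gamma3_eq_Q (K : fieldType) (n : nat) (eta : 'I_n -> K) :
  n = 6%N -> (forall i, eta i ^+ 2 = 1) ->
  2%:R != 0 :> K -> 3%:R != 0 :> K -> 5%:R != 0 :> K ->
  (forall T : cl K n, Gamma eta 3 T <-> in_Q eta T)
  /\ (exists T : cl K n, ~ (Gamma eta 1 T <-> Gamma eta 3 T))
  /\ (let T := cl_one K n + cl_scale 2 (@blade K n setT) in
      Gamma eta 3 T /\ ~ Gamma eta 1 T).
Proof.
move=> n6 eta_sqr two_neq0 three_neq0 five_neq0; subst n.
have eta_neq0 i : eta i != 0.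
  by apply: contra_eq_neq (eta_sqr i) => ->; rewrite expr0n eq_sym oner_eq0.
have kappa_sqr : kappa eta ^+ 2 = 1.
  rewrite /kappa /blade_coef exprMn expr2 sign_sqr mul1r -prodrXl.
  by rewrite big1 // => i _; rewrite eta_sqr.
have d_neq0 : 1 - 4%:R * kappa eta != 0.
  move/eqP: kappa_sqr; rewrite sqrf_eq1 => /orP[]/eqP ->.
    by rewrite (_ : 1 - 4%:R * 1 = - 3%:R :> K) ?oppr_eq0 //; ring.
  by rewrite (_ : 1 - 4%:R * -1 = 5%:R :> K) //; ring.
have G3 := Q_sub_Gamma3 two_neq0 (example_in_Q d_neq0).
have nG1 := example_not_Gamma1 eta_neq0 two_neq0.
split; first by split; [apply: Gamma3_sub_Q | apply: Q_sub_Gamma3].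
by split; [exists (example_elt K) => -[_ /(_ G3)] | split].
Qed.

Theorem mainTheorem17 :
  (forall (R : realType) (p q : nat) (Hpq : (p + q = 6)%N),
      let eta := @eta_pq R p q in
      (forall T : cl R (p + q), Gamma eta 3 T <-> in_Q eta T)
   /\ (exists T : cl R (p + q), ~ (Gamma eta 1 T <-> Gamma eta 3 T))
   /\ (let T := cl_one R (p + q) + cl_scale 2 (@blade R (p + q) setT) in
       Gamma eta 3 T /\ ~ Gamma eta 1 T))
  /\
  (forall R : realType,
      let eta := @eta_C R 6 in
      (forall T : cl R[i] 6, Gamma eta 3 T <-> in_Q eta T)
   /\ (exists T : cl R[i] 6, ~ (Gamma eta 1 T <-> Gamma eta 3 T))
   /\ (let T := cl_one R[i] 6 + cl_scale 2 (@blade R[i] 6 setT) in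
       Gamma eta 3 T /\ ~ Gamma eta 1 T)).
Proof.
split=> [R p q Hpq eta | R eta]; apply: unit_metric_Gamma3_eq_Q; rewrite ?pnatr_eq0 //.
- by move=> i; rewrite /eta /eta_pq; case: ifP => _; rewrite ?sqrrN expr1n.
- by move=> i; rewrite /eta /eta_C expr1n.
Qed.
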